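(* Let $K\subseteq\mathbb{R}^n$ be a closed convex set of dimension at least $2$, and let $O\in\partial K$. Then $\mathrm{CR}(O)\geq \mathrm{LCD}(O)$.
   Context: For $r>0$, $S_r(O)\subseteq\mathbb{R}^n$ denotes the Euclidean sphere of radius $r$ centered at $O$. The connectivity radius $\mathrm{CR}(O)$ is the supremum of all $\epsilon$ such that for every $0<r<\epsilon$ the intersection $S_r(O)\cap K$ is connected. A point $P\in\partial K\setminus\{O\}$ is called $O$-critical if $\langle O-P, X-P\rangle\geq 0$ for all $X\in K$ (equivalently, the affine hyperplane through $P$ orthogonal to the segment $OP$ is a supporting hyperplane of $K$). The least critical distance $\mathrm{LCD}(O)$ is the infimum of $|OP|$ over all $O$-critical points $P\in\partial K$. *)

From HB Require Import structures.
From mathcomp Require Import all_boot all_order all_algebra.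
From mathcomp Require Import all_classical all_reals all_analysis.
Set Implicit Arguments. Unset Strict Implicit. Unset Printing Implicit Defensive.
Import Order.TTheory GRing.Theory Num.Theory.
Import numFieldNormedType.Exports.
Local Open Scope classical_set_scope.
Local Open Scope ring_scope.

(* Points of R^n are row vectors 'rV[R]_n; the topology on 'rV[R]_n is the
   product topology (= Euclidean topology). Distances are Euclidean. *)

Section Defs.
Variables (R : realType) (n : nat).
Implicit Types (x y O P X : 'rV[R]_n) (K : set 'rV[R]_n).

Definition dotp x y : R := \sum_(i < n) x 0 i * y 0 i.
Definition enorm x : R := Num.sqrt (dotp x x).

Definition esphere O (r : R) : set 'rV[R]_n := [set x | enorm (x - O) = r].

Definition is_convex K : Prop :=
  forall x y t, K x -> K y -> 0 <= t <= 1 -> K (t *: x + (1 - t) *: y).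

Definition bnd K : set 'rV[R]_n := closure K `\` interior K.

Definition affdim_ge2 K : Prop :=
  exists (m : nat) (p0 : 'rV[R]_n) (p : 'I_m -> 'rV[R]_n),
    K p0 /\ (forall i, K (p i)) /\ (2 <= \rank (\matrix_(i < m) (p i - p0)))%N.

Definition CR K O : \bar R :=
  ereal_sup [set e%:E | e in [set e : R | forall r : R, 0 < r -> r < e ->
                          connected (esphere O r `&` K)]].

Definition critical K O P : Prop :=
  bnd K P /\ P != O /\ forall X, K X -> 0 <= dotp (O - P) (X - P).

Definition LCD K O : \bar R :=
  ereal_inf [set (enorm (P - O))%:E | P in critical K O].

End Defs.

From mathcomp Require Import all_boot all_order all_algebra.
From mathcomp Require Import all_classical all_reals all_analysis.
From mathcomp Require Import ring lra.
Import numFieldNormedType.Exports.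
Local Open Scope classical_set_scope.
Local Open Scope ring_scope.
Set Implicit Arguments. Unset Strict Implicit. Unset Printing Implicit Defensive.
Import Order.TTheory GRing.Theory Num.Theory.

(* Translate O to the origin.  If r < LCD(O), no y in K with 0 < |y| <= r is
   critical, i.e. y is not the point of K nearest to 2y; hence the map
   y |-> proj_K (2y) strictly increases |y| there, and the segment from y to its
   image stays outside the open ball of radius |y|.  By compactness, finitely
   many iterations push K minus a small ball around 0 outside the ball of
   radius r, along paths that never move closer to the origin.  As dim K >= 2,
   K contains two non-parallel points a, b, and every x in S_r(0) /\ K is joined
   to a or b by a segment avoiding a small ball around 0.  Pushing these
   segments out and projecting radially back onto S_r(0) links every point of
   S_r(0) /\ K to one common point. *)

Section Euclidean.
Variables (R : realType) (n : nat).
Implicit Types (x y z : 'rV[R]_n) (a : R).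
Local Notation dot := (@dotp R n).
Local Notation nm := (@enorm R n).

Lemma dotpC x y : dot x y = dot y x.
Proof. by apply: eq_bigr => i _; rewrite mulrC. Qed.

Lemma dotpDl x y z : dot (x + y) z = dot x z + dot y z.
Proof. by rewrite /dotp -big_split; apply: eq_bigr => i _; rewrite mxE mulrDl. Qed.

Lemma dotpDr x y z : dot z (x + y) = dot z x + dot z y.
Proof. by rewrite dotpC dotpDl !(dotpC z). Qed.

Lemma dotpZl a x y : dot (a *: x) y = a * dot x y.
Proof. by rewrite /dotp mulr_sumr; apply: eq_bigr => i _; rewrite mxE mulrA. Qed.

Lemma dotpZr a x y : dot x (a *: y) = a * dot x y.
Proof. by rewrite dotpC dotpZl dotpC. Qed.

Lemma dotpNl x y : dot (- x) y = - dot x y.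
Proof. by rewrite -scaleN1r dotpZl mulN1r. Qed.

Lemma dotpNr x y : dot x (- y) = - dot x y.
Proof. by rewrite dotpC dotpNl dotpC. Qed.

Lemma dotpBl x y z : dot (x - y) z = dot x z - dot y z.
Proof. by rewrite dotpDl dotpNl. Qed.

Lemma dotpBr x y z : dot z (x - y) = dot z x - dot z y.
Proof. by rewrite dotpDr dotpNr. Qed.

Definition dotpE := (dotpBl, dotpBr, dotpDl, dotpDr, dotpNl, dotpNr, dotpZl, dotpZr).

Lemma dotp0l x : dot 0 x = 0.
Proof. by rewrite -(scale0r 0) dotpZl mul0r. Qed.

Lemma dotp0r x : dot x 0 = 0.
Proof. by rewrite dotpC dotp0l. Qed.

Lemma dotpp_ge0 x : 0 <= dot x x.
Proof. by rewrite sumr_ge0 // => i _; rewrite -expr2 sqr_ge0. Qed.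

Lemma dotpp_eq0 x : (dot x x == 0) = (x == 0).
Proof.
apply/idP/eqP => [|->]; last by rewrite dotp0l.
rewrite psumr_eq0 => [/allP x0|i _]; last by rewrite -expr2 sqr_ge0.
apply/rowP => i; rewrite mxE.
by have := x0 i (mem_index_enum _); rewrite /= -expr2 sqrf_eq0 => /eqP.
Qed.

Lemma enorm_ge0 x : 0 <= nm x.
Proof. exact: sqrtr_ge0. Qed.

Lemma sqr_enorm x : nm x ^+ 2 = dot x x.
Proof. by rewrite sqr_sqrtr // dotpp_ge0. Qed.

Lemma enorm_eq0 x : (nm x == 0) = (x == 0).
Proof. by rewrite -dotpp_eq0 -sqr_enorm sqrf_eq0. Qed.

Lemma enorm_gt0 x : (0 < nm x) = (x != 0).
Proof. by rewrite lt_def enorm_eq0 enorm_ge0 andbT. Qed.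

Lemma enorm0 : nm 0 = 0.
Proof. by apply/eqP; rewrite enorm_eq0. Qed.

Lemma enormZ a x : nm (a *: x) = `|a| * nm x.
Proof.
by rewrite /enorm dotpZl dotpZr mulrA -expr2 sqrtrM ?sqr_ge0 // sqrtr_sqr.
Qed.

Lemma enormN x : nm (- x) = nm x.
Proof. by rewrite -scaleN1r enormZ normrN1 mul1r. Qed.

Lemma enormBC x y : nm (x - y) = nm (y - x).
Proof. by rewrite -enormN opprB. Qed.

Lemma dotpp_subZ x y a :
  dot (x - a *: y) (x - a *: y) = dot x x - 2 * a * dot x y + a ^+ 2 * dot y y.
Proof. by rewrite !dotpE (dotpC y x); ring. Qed.

Lemma dotp_sqr_le x y : dot x y ^+ 2 <= dot x x * dot y y.
Proof.
have [->|y0] := eqVneq y 0; first by rewrite !dotp0r expr0n mulr0.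
have yy : 0 < dot y y by rewrite lt_def dotpp_eq0 y0 dotpp_ge0.
have := dotpp_ge0 (dot y y *: x - dot x y *: y).
rewrite !dotpE (dotpC y x) => xy_ge0.
rewrite -subr_ge0 -(pmulr_rge0 _ yy); apply: le_trans xy_ge0 _.
by rewrite le_eqVlt; apply/orP; left; apply/eqP; ring.
Qed.

Lemma collinear_of_dotp_sqr_ge x y : dot x x * dot y y <= dot x y ^+ 2 -> y != 0 ->
  x = (dot x y / dot y y) *: y.
Proof.
move=> xy y0; have yy : 0 < dot y y by rewrite lt_def dotpp_eq0 y0 dotpp_ge0.
apply/eqP; rewrite -subr_eq0 -dotpp_eq0 eq_le dotpp_ge0 andbT dotpp_subZ.
have -> : dot x x - 2 * (dot x y / dot y y) * dot x y + (dot x y / dot y y) ^+ 2 * dot y y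
    = (dot x x * dot y y - dot x y ^+ 2) / dot y y by field; rewrite gt_eqF.
by rewrite pmulr_lle0 ?invr_gt0 // subr_le0.
Qed.

Lemma dotp_le x y : dot x y <= nm x * nm y.
Proof.
rewrite -sqrtrM ?dotpp_ge0 //; have [xy0|xy0] := lerP (dot x y) 0.
  exact: le_trans xy0 (sqrtr_ge0 _).
by rewrite -(ger0_norm (ltW xy0)) -sqrtr_sqr ler_sqrt ?dotp_sqr_le ?mulr_ge0 ?dotpp_ge0.
Qed.

Lemma normr_dotp_le x y : `|dot x y| <= nm x * nm y.
Proof.
rewrite ler_norml dotp_le andbT lerNl -dotpNl.
by rewrite -[nm x]enormN dotp_le.
Qed.

Lemma ler_enormD x y : nm (x + y) <= nm x + nm y.
Proof.
rewrite -(ler_pXn2r (_ : (0 < 2)%N)) ?nnegrE ?addr_ge0 ?enorm_ge0 //.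
rewrite sqr_enorm sqrrD !sqr_enorm !dotpE (dotpC y x).
by have := dotp_le x y; lra.
Qed.

Lemma lerB_enorm x y : nm x - nm y <= nm (x - y).
Proof. by have := ler_enormD (x - y) y; rewrite subrK; lra. Qed.

Lemma ler_enorm_dist x y : `|nm x - nm y| <= nm (x - y).
Proof. by rewrite ler_norml lerB_enorm andbT lerNl opprB enormBC lerB_enorm. Qed.

(* The norm [`|x|] of the normed space ['rV[R]_n] is the sup norm. *)
Lemma normr_le_enorm x : `|x| <= nm x.
Proof.
rewrite [`|x|]mx_normrE; apply/bigmax_leP; split => [|[i j] _ /=]; first exact: enorm_ge0.
rewrite ord1 -sqrtr_sqr ler_sqrt ?dotpp_ge0 // /dotp (bigD1 j) //= -expr2 lerDl.
by apply: sumr_ge0 => k _; rewrite -expr2 sqr_ge0.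
Qed.

Lemma enorm_le_normr x : nm x <= (Num.sqrt n%:R + 1) * `|x|.
Proof.
apply: (@le_trans _ _ (Num.sqrt n%:R * `|x|)); last by rewrite ler_wpM2r ?lerDl.
rewrite -[in leRHS](normr_id x) -sqrtr_sqr -sqrtrM // ler_sqrt ?mulr_ge0 ?sqr_ge0 //.
rewrite mulr_natl -[in X in _ *+ X](card_ord n) -sumr_const; apply: ler_sum => i _.
rewrite -expr2 -real_normK ?num_real // ler_sqr ?nnegrE //.
by rewrite [`|x|]mx_normrE (le_bigmax _ (fun ij : 'I_1 * 'I_n => `|x ij.1 ij.2|) (0, i)).
Qed.

Lemma enorm_lipschitz_continuous (V : normedModType R) (f : 'rV[R]_n -> V) :
  (forall x y, `|f y - f x| <= nm (y - x)) -> continuous f.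
Proof.
move=> f_lip x; apply/(@cvgrPdist_lt _ _ _ (nbhs x) (nbhs_filter x)) => e e0.
have C0 : 0 < Num.sqrt (n%:R : R) + 1 by rewrite ltr_wpDl ?sqrtr_ge0.
apply/(@nbhs_normP _ 'rV[R]_n); exists (e / (Num.sqrt n%:R + 1)).
  by rewrite /= divr_gt0.
move=> y /= xy; rewrite distrC; apply: le_lt_trans (f_lip _ _) _.
apply: le_lt_trans (enorm_le_normr _) _.
by rewrite mulrC -ltr_pdivlMr // distrC.
Qed.

Lemma continuous_enormB z : continuous (fun x => nm (x - z)).
Proof.
apply: enorm_lipschitz_continuous => x y; apply: le_trans (ler_enorm_dist _ _) _.
by rewrite opprB addrA subrK addrC.
Qed.

Lemma enorm_continuous : continuous nm.
Proof. by apply: enorm_lipschitz_continuous => x y; apply: ler_enorm_dist. Qed.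

End Euclidean.

Section Segment.
Variables (R : realType) (n : nat).
Implicit Types (u v x : 'rV[R]_n) (K : set 'rV[R]_n).
Local Notation nm := (@enorm R n).

Definition seg u v : set 'rV[R]_n := [set u + t *: (v - u) | t in `[0, 1]].

Lemma seg_connected u v : connected (seg u v).
Proof.
apply: connected_continuous_connected (@segment_connected R 0 1) _.
apply: continuous_subspaceT => t.
by apply: cvgD; [exact: cvg_cst | apply: cvgZ; [exact: cvg_id | exact: cvg_cst]].
Qed.

Lemma seg_l u v : seg u v u.
Proof. by exists 0; [rewrite /= in_itv /= lexx ler01 | rewrite scale0r addr0]. Qed.

Lemma seg_r u v : seg u v v.
Proof. by exists 1; [rewrite /= in_itv /= lexx ler01 | rewrite scale1r addrC subrK]. Qed.

Lemma convex_seg_sub K u v : is_convex K -> K u -> K v -> seg u v `<=` K.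
Proof.
move=> convK Ku Kv _ [t t01 <-]; move: t01; rewrite /= in_itv /= => t01.
have := convK _ _ _ Kv Ku t01; congr K.
by apply/rowP => i; rewrite !mxE; ring.
Qed.

Lemma seg_ball z u v (c : R) : nm (z - u) <= c -> nm (z - v) <= c ->
  forall y, seg u v y -> nm (z - y) <= c.
Proof.
move=> zu zv _ [t t01 <-]; move: t01; rewrite /= in_itv /= => /andP[t0 t1].
have -> : z - (u + t *: (v - u)) = (1 - t) *: (z - u) + t *: (z - v).
  by rewrite !scalerBr !scalerBl scale1r; apply/rowP => i; rewrite !mxE; ring.
apply: le_trans (ler_enormD _ _) _; rewrite !enormZ !ger0_norm ?subr_ge0 //.
have : t * nm (z - v) <= t * c by rewrite ler_wpM2l.
have : (1 - t) * nm (z - u) <= (1 - t) * c by rewrite ler_wpM2l ?subr_ge0.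
lra.
Qed.

End Segment.

Section Topology.
Variables (R : realType) (n : nat).
Implicit Types (z : 'rV[R]_n) (A : set 'rV[R]_n).
Local Notation dot := (@dotp R n).
Local Notation nm := (@enorm R n).

Lemma closed_enorm_le z (c : R) : closed [set x | nm (x - z) <= c].
Proof.
exact: (@preimage_closed _ R _ [set y | y <= c]
  (fun x _ => @continuous_enormB R n z x) (@closed_le R c)).
Qed.

Lemma closed_enorm_ge (c : R) : closed [set x : 'rV[R]_n | c <= nm x].
Proof.
exact: (@preimage_closed _ R nm [set y | c <= y]
  (fun x _ => @enorm_continuous R n x) (@closed_ge R c)).
Qed.

Lemma compact_closedI_ball A z (c : R) :
  closed A -> compact (A `&` [set x | nm (x - z) <= c]).
Proof.
move=> closedA; apply: bounded_closed_compact; last first.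
  by apply: closedI => //; apply: closed_enorm_le.
exists (nm z + c); split; first exact: num_real.
move=> M zcM x [_ /= xzc]; apply: le_trans (normr_le_enorm _) _.
apply: le_trans (ltW zcM); rewrite -[x](subrK z) addrC.
by apply: le_trans (ler_enormD _ _) _; rewrite lerD2l.
Qed.

Lemma not_interior_supporting A p w : w != 0 ->
  (forall x, A x -> dot w (x - p) <= 0) -> ~ interior A p.
Proof.
move=> w0 supp /(@nbhs_normP _ 'rV[R]_n) [e /= e0 ball_e].
pose eps := e / (2 * (`|w| + 1)).
have eps0 : 0 < eps by rewrite divr_gt0 // mulr_gt0 // ltr_wpDl.
have : A (p + eps *: w).
  apply: ball_e; rewrite /= opprD addrA subrr sub0r normrN normrZ gtr0_norm //.
  rewrite /eps mulrAC ltr_pdivrMr ?mulr_gt0 ?ltr_wpDl //.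
  by have : 0 <= `|w| by []; nra.
move=> /supp; rewrite addrAC subrr add0r dotpZr leNgt.
by rewrite mulr_gt0 // lt_def dotpp_eq0 w0 dotpp_ge0.
Qed.

End Topology.

Section Projection.
Variables (R : realType) (n : nat) (K : set 'rV[R]_n).
Hypothesis convexK : is_convex K.
Implicit Types (x z p : 'rV[R]_n).
Local Notation dot := (@dotp R n).
Local Notation nm := (@enorm R n).

Definition nearest z p := K p /\ forall x, K x -> nm (z - p) <= nm (z - x).

Lemma nearest_obtuse z p x : nearest z p -> K x -> dot (z - p) (x - p) <= 0.
Proof.
move=> [Kp p_min] Kx; set c := dot (z - p) (x - p); set D := dot (x - p) (x - p).
have D0 : 0 <= D := dotpp_ge0 _.
suff : 2 * c <= 0 by lra.
apply/ler_addgt0Pr => e e0; rewrite add0r.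
pose t := Num.min 1 (e / (D + 1)).
have t0 : 0 < t by rewrite lt_min ltr01 divr_gt0 // ltr_wpDl.
have tD : t * D <= e.
  have : t * (D + 1) <= e by rewrite -ler_pdivlMr ?ltr_wpDl // ge_min lexx orbT.
  by rewrite mulrDr mulr1; lra.
have Kt : K (p + t *: (x - p)).
  by apply: (convex_seg_sub convexK Kp Kx); exists t; rewrite //= in_itv /= ltW // ge_min lexx.
have := p_min _ Kt; rewrite opprD addrA.
rewrite -(ler_pXn2r (_ : (0 < 2)%N)) ?nnegrE ?enorm_ge0 // !sqr_enorm dotpp_subZ -/c -/D => tc.
have : t * (2 * c) <= t * (t * D) by lra.
by rewrite ler_pM2l //; lra.
Qed.

Hypotheses (closedK : closed K) (K0 : K !=set0).

Lemma nearest_exists z : exists p, nearest z p.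
Proof.
have [k Kk] := K0.
have dc : continuous (fun x => nm (z - x)).
  by move=> x; under eq_fun do rewrite enormBC; apply: continuous_enormB.
have [p] := EVT_min_rV (ex_intro _ k (conj Kk (lexx (nm (k - z)))))
  (compact_closedI_ball (z := z) (c := nm (k - z)) closedK) (continuous_subspaceT dc).
rewrite inE => -[Kp _] p_min; exists p; split => // x Kx.
have [xz|xz] := lerP (nm (x - z)) (nm (k - z)); first by apply: p_min; rewrite inE.
have := p_min k; rewrite inE => /(_ (conj Kk (lexx _))) /le_trans; apply.
by rewrite enormBC (enormBC z) ltW.
Qed.

Definition cproj z := xget 0 (nearest z).

Lemma cprojP z : nearest z (cproj z).
Proof. exact: xgetPex (nearest_exists z). Qed.

Lemma cproj_mem z : K (cproj z).
Proof. by case: (cprojP z). Qed.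

Lemma cproj_lipschitz z1 z2 : nm (cproj z1 - cproj z2) <= nm (z1 - z2).
Proof.
set p1 := cproj z1; set p2 := cproj z2.
have h1 := nearest_obtuse (cprojP z1) (cproj_mem z2).
have h2 := nearest_obtuse (cprojP z2) (cproj_mem z1).
have pp : dot (p1 - p2) (p1 - p2) <= dot (z1 - z2) (p1 - p2).
  move: h1 h2; rewrite -/p1 -/p2 !dotpE (dotpC p1 p2) (dotpC z1 p2) (dotpC z2 p1).
  by rewrite (dotpC p2 z1) (dotpC p1 z2); lra.
have [->|p12] := eqVneq (p1 - p2) 0; first by rewrite (@enorm0 R n) enorm_ge0.
rewrite -(ler_pM2r (_ : 0 < nm (p1 - p2))) ?enorm_gt0 // -expr2 sqr_enorm.
exact: le_trans pp (dotp_le _ _).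
Qed.

Lemma cproj_continuous : continuous cproj.
Proof.
apply: enorm_lipschitz_continuous => x y.
exact: le_trans (normr_le_enorm _) (cproj_lipschitz _ _).
Qed.

End Projection.

Section Angles.
Variables (R : realType) (n : nat).
Implicit Types (a b u v w x : 'rV[R]_n) (k m s : R).
Local Notation dot := (@dotp R n).
Local Notation nm := (@enorm R n).

Lemma seg_enorm_ge_of_dotp w u v s : nm w <= 1 -> s <= dot w u -> s <= dot w v ->
  forall y, seg u v y -> s <= nm y.
Proof.
move=> w1 su sv _ [t t01 <-]; move: t01; rewrite /= in_itv /= => /andP[t0 t1].
have : s <= dot w (u + t *: (v - u)).
  rewrite dotpDr dotpZr dotpBr.
  have : t * s <= t * dot w v by rewrite ler_wpM2l.
  have : (1 - t) * s <= (1 - t) * dot w u by rewrite ler_wpM2l ?subr_ge0.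
  lra.
move/le_trans; apply; apply: le_trans (dotp_le _ _) _.
by apply: ler_piMl; rewrite ?enorm_ge0.
Qed.

Lemma seg_enorm_ge u v k m : 0 <= k -> 0 < m -> m <= nm u -> m <= nm v ->
  (k - 1) * (nm u * nm v) <= dot u v -> forall y, seg u v y -> k * m / 2 <= nm y.
Proof.
move=> k0 m0 mu mv uv.
have u0 : 0 < nm u by apply: lt_le_trans mu.
have v0 : 0 < nm v by apply: lt_le_trans mv.
have P0 : 0 < 2 * nm u * nm v by rewrite !mulr_gt0.
(* test against half the sum of the unit vectors along u and v *)
apply: (@seg_enorm_ge_of_dotp ((2 * nm u * nm v)^-1 *: (nm v *: u + nm u *: v))).
- rewrite enormZ gtr0_norm ?invr_gt0 // ler_pdivrMl // mulr1.
  apply: le_trans (ler_enormD _ _) _.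
  by rewrite !enormZ !gtr0_norm // (mulrC (nm v)); lra.
- rewrite dotpZl dotpDl !dotpZl -sqr_enorm (dotpC v u) [leRHS]mulrC ler_pdivlMr //.
  have : nm u * ((k - 1) * (nm u * nm v)) <= nm u * dot u v by rewrite ler_wpM2l // ltW.
  have : 0 <= k * nm v * nm u * (nm u - m) by rewrite !mulr_ge0 ?subr_ge0 // ltW.
  nra.
- rewrite dotpZl dotpDl !dotpZl -[dot v v]sqr_enorm [leRHS]mulrC ler_pdivlMr //.
  have : nm v * ((k - 1) * (nm u * nm v)) <= nm v * dot u v by rewrite ler_wpM2l // ltW.
  have : 0 <= k * nm v * nm u * (nm v - m) by rewrite !mulr_ge0 ?subr_ge0 // ltW.
  nra.
Qed.

Lemma dotp_dichotomy a b x k : 0 < nm a -> 0 < nm b ->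
  4 * k * (nm a * nm b) <= nm a * nm b - dot a b ->
  (k - 1) * (nm x * nm a) <= dot x a \/ (k - 1) * (nm x * nm b) <= dot x b.
Proof.
move=> a0 b0 abk.
have [xa|xa] := lerP ((k - 1) * (nm x * nm a)) (dot x a); first by left.
have [xb|xb] := lerP ((k - 1) * (nm x * nm b)) (dot x b); first by right.
exfalso; have [x0|x0] := eqVneq x 0.
  by move: xa; rewrite x0 dotp0l (@enorm0 R n) mul0r mulr0 ltxx.
rewrite -enorm_gt0 in x0.
set P := nm a * nm b in abk; have P0 : 0 < P by rewrite mulr_gt0.
(* x would make too obtuse an angle with the bisector v of a and b *)
set v := nm b *: a + nm a *: b.
have k1 : 1 - k >= 0.
  have := normr_dotp_le a b; rewrite -/P ler_norml => /andP[+ _].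
  by rewrite -(ler_pM2r P0); nra.
have xv : dot x v < 2 * (k - 1) * (nm x * P).
  rewrite dotpDr !dotpZr.
  have := ltr_pM2l b0 (dot x a) ((k - 1) * (nm x * nm a)); rewrite xa => /esym/idP.
  have := ltr_pM2l a0 (dot x b) ((k - 1) * (nm x * nm b)); rewrite xb => /esym/idP.
  rewrite /P; nra.
have vP : 2 * (1 - k) * P < nm v.
  rewrite -(ltr_pM2l x0); apply: lt_le_trans (_ : - dot x v <= _).
    by move: xv; lra.
  by apply: le_trans (normr_dotp_le _ _); rewrite -normrN ler_norm.
have : (2 * (1 - k) * P) ^+ 2 < nm v ^+ 2.
  by rewrite ltr_pXn2r ?nnegrE ?enorm_ge0 ?mulr_ge0 // ltW.
have -> : nm v ^+ 2 = 2 * P ^+ 2 + 2 * P * dot a b.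
  by rewrite sqr_enorm /v !dotpE -!sqr_enorm (dotpC b a) /P; ring.
have : P * dot a b <= P * (P - 4 * k * P) by rewrite ler_pM2l //; lra.
have : 0 <= (k * P) ^+ 2 by apply: sqr_ge0.
nra.
Qed.

Lemma segments_enorm_ge a b (r : R) : 0 < r -> dot a b ^+ 2 < dot a a * dot b b ->
  exists2 s, 0 < s <= r & (forall y, seg a b y -> s <= nm y) /\
    forall x, nm x = r -> exists2 c, c = a \/ c = b & forall y, seg x c y -> s <= nm y.
Proof.
move=> r0 ab.
have a0 : 0 < nm a.
  by rewrite enorm_gt0; apply: contraTneq ab => ->; rewrite !dotp0l expr0n mul0r ltxx.
have b0 : 0 < nm b.
  by rewrite enorm_gt0; apply: contraTneq ab => ->; rewrite !dotp0r expr0n mulr0 ltxx.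
set P := nm a * nm b; have P0 : 0 < P by rewrite mulr_gt0.
set c := dot a b / P; have abc : dot a b = c * P by rewrite divfK ?gt_eqF.
have c1 : `|c| < 1.
  rewrite -(ltr_pXn2r (_ : (0 < 2)%N)) ?nnegrE // real_normK ?num_real // expr1n.
  by rewrite -(ltr_pM2r (exprn_gt0 2 P0)) mul1r -exprMn -abc exprMn !sqr_enorm.
set k := (1 - `|c|) / 4.
have k0 : 0 < k by rewrite divr_gt0 ?subr_gt0.
have k4 : 4 * k <= 1 - c by rewrite /k; have := ler_norm c; lra.
have kc : k - 1 <= c by rewrite /k; have := lerNnormlW (lexx `|c|); lra.
set m := Num.min r (Num.min (nm a) (nm b)).
have m0 : 0 < m by rewrite !lt_min r0 a0 b0.
have [mr ma mb] : [/\ m <= r, m <= nm a & m <= nm b].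
  by rewrite !ge_min !lexx !orbT.
exists (k * m / 2).
  have k1 : k <= 1 by rewrite /k; have := normr_ge0 c; lra.
  have := ler_piMl (ltW m0) k1.
  have : 0 < k * m by rewrite mulr_gt0.
  by move=> km0 km; apply/andP; split; lra.
split.
  by apply: seg_enorm_ge (ltW k0) m0 ma mb _; rewrite -/P abc; nra.
have abk : 4 * k * P <= P - dot a b by rewrite abc; nra.
move=> x xr; have [xa|xb] := dotp_dichotomy x a0 b0 abk.
  by exists a; [left | apply: seg_enorm_ge (ltW k0) m0 _ ma xa; rewrite xr].
by exists b; [right | apply: seg_enorm_ge (ltW k0) m0 _ mb xb; rewrite xr].
Qed.

End Angles.

Section Radial.
Variables (R : realType) (n : nat) (K : set 'rV[R]_n) (r : R).
Hypotheses (convexK : is_convex K) (K0 : K 0) (r0 : 0 < r).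
Implicit Types (x y p : 'rV[R]_n).
Local Notation nm := (@enorm R n).

Definition radial y := (r / nm y) *: y.

Lemma radial_mem y : K y -> r <= nm y -> (esphere 0 r `&` K) (radial y).
Proof.
move=> Ky ry; have y0 : 0 < nm y := lt_le_trans r0 ry.
split; first by rewrite /esphere /= subr0 enormZ ger0_norm ?divr_ge0 ?ltW // divfK ?gt_eqF.
apply: (convex_seg_sub convexK K0 Ky); exists (r / nm y); last by rewrite add0r subr0.
by rewrite /= in_itv /= divr_ge0 ?enorm_ge0 ?(ltW r0) //= ler_pdivrMr // mul1r.
Qed.

Lemma radial_id x : nm x = r -> radial x = x.
Proof. by move=> xr; rewrite /radial xr divff ?scale1r ?gt_eqF. Qed.

Lemma radial_continuous y : y != 0 -> {for y, continuous radial}.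
Proof.
rewrite -enorm_gt0 => y0; apply: continuousZ; last exact: cvg_id.
apply: continuousM; first exact: cst_continuous.
exact: continuousV (lt0r_neq0 y0) (@enorm_continuous R n y).
Qed.

Lemma connected_sphere_of_links p :
  (forall x, (esphere 0 r `&` K) x -> exists T : set 'rV[R]_n,
    [/\ connected T, T x, T p & T `<=` [set y | K y /\ r <= nm y]]) ->
  connected (esphere 0 r `&` K).
Proof.
move=> links.
pose P := [set T : set 'rV[R]_n |
  [/\ connected T, T p & T `<=` [set y | K y /\ r <= nm y]]].
have -> : esphere 0 r `&` K = \bigcup_(T in P) radial @` T.
  apply/seteqP; split => [x Mx|_ [T [_ _ Tfar] [y Ty <-]]].
    have [T [cT Tx Tp Tfar]] := links x Mx; exists T => //; exists x => //.
    by apply: radial_id; case: Mx; rewrite /esphere /= subr0.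
  by have [Ky ry] := Tfar y Ty; apply: radial_mem.
apply: bigcup_connected => [|T [cT _ Tfar]].
  by exists (radial p) => T [_ Tp _]; exists p.
apply: connected_continuous_connected cT _; apply: continuous_in_subspaceT => y.
rewrite inE => /Tfar[_ ry]; apply: radial_continuous.
by rewrite -enorm_gt0; apply: lt_le_trans r0 ry.
Qed.

End Radial.

Section Expansion.
Variables (R : realType) (n : nat) (K : set 'rV[R]_n) (r : R).
Hypotheses (closedK : closed K) (convexK : is_convex K) (K0 : K 0) (r0 : 0 < r).
Local Notation dot := (@dotp R n).
Local Notation nm := (@enorm R n).
(* no point of K at distance in (0, r] from the origin is critical *)
Hypothesis noncritical : forall y, K y -> 0 < nm y -> nm y <= r ->
  exists2 z, K z & 0 < dot y (z - y).
Implicit Types (x y z : 'rV[R]_n).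

Definition expand x := cproj K (2 *: x).

Let K_neq0 : K !=set0. Proof. by exists 0. Qed.

Let double_subr x : 2 *: x - x = x. Proof. by rewrite scaler_nat mulr2n addrK. Qed.

Lemma expand_mem x : K (expand x).
Proof. exact: cproj_mem. Qed.

Lemma enorm_ge_of_ball x y : nm (2 *: x - y) <= nm x -> nm x <= nm y.
Proof.
have := ler_enormD y (2 *: x - y); rewrite addrC subrK enormZ ger0_norm //; lra.
Qed.

Lemma expand_near x : K x -> nm (2 *: x - expand x) <= nm x.
Proof.
move=> Kx; have [_ /(_ x Kx)] := cprojP closedK K_neq0 (2 *: x).
by rewrite double_subr.
Qed.

Lemma seg_expand_enorm_ge x y : K x -> seg x (expand x) y -> nm x <= nm y.
Proof.
move=> Kx xy; apply: enorm_ge_of_ball; apply: seg_ball xy; last exact: expand_near.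
by rewrite double_subr.
Qed.

Lemma expand_enorm_ge x : K x -> nm x <= nm (expand x).
Proof. by move=> Kx; apply: seg_expand_enorm_ge Kx (seg_r _ _). Qed.

Lemma expand_enorm_gt x : K x -> 0 < nm x -> nm x <= r -> nm x < nm (expand x).
Proof.
move=> Kx x0 xr; have [z Kz xz] := noncritical Kx x0 xr.
have near_lt : nm (2 *: x - expand x) < nm x.
  rewrite lt_neqAle expand_near // andbT; apply/negP => /eqP eq_x.
  have x_nearest : nearest K (2 *: x) x.
    split => // w Kw; rewrite double_subr -eq_x.
    by have [_] := cprojP closedK K_neq0 (2 *: x); apply.
  by have := nearest_obtuse convexK x_nearest Kz; rewrite double_subr leNgt xz.
have := ler_enormD (expand x) (2 *: x - expand x).
by rewrite addrC subrK enormZ ger0_norm //; lra.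
Qed.

Lemma expand_continuous : continuous expand.
Proof.
move=> x; apply: continuous_comp; last exact: cproj_continuous.
exact: scaler_continuous.
Qed.

Lemma expand_gain s : 0 < s -> exists2 eta, 0 < eta &
  forall x, K x -> s <= nm x -> nm x <= r -> nm x + eta <= nm (expand x).
Proof.
move=> s0; set A := (K `&` [set x | s <= nm x]) `&` [set x | nm (x - 0) <= r].
have [[x Ax]|A0] := pselect (A !=set0); last first.
  by exists 1 => // x Kx sx xr; exfalso; apply: A0; exists x; rewrite /A /= subr0.
have gain_continuous : continuous (fun x => nm (expand x) - nm x).
  move=> y; apply: (@continuousB R R^o _ (nm \o expand) nm); last exact: enorm_continuous.
  by apply: continuous_comp; [apply: expand_continuous | apply: enorm_continuous].
have Ac : compact A.
  by apply: compact_closedI_ball; apply: closedI => //; apply: closed_enorm_ge.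
have [z] := EVT_min_rV (ex_intro _ x Ax) Ac (continuous_subspaceT gain_continuous).
rewrite inE /A /= subr0 => -[[Kz sz] zr] z_min; exists (nm (expand z) - nm z).
  by rewrite subr_gt0 expand_enorm_gt // (lt_le_trans s0).
move=> y Ky sy yr; have := z_min y; rewrite inE /A /= subr0 => /(_ (conj (conj Ky sy) yr)).
lra.
Qed.

Lemma iter_expand_mem k x : K x -> K (iter k expand x).
Proof. by case: k => // k _; apply: expand_mem. Qed.

Lemma iter_expand_continuous k : continuous (iter k expand).
Proof.
elim: k => [|k IH] x; first exact: cvg_id.
by apply: continuous_comp; [apply: IH | apply: expand_continuous].
Qed.

Lemma iter_expand_escape s : 0 < s ->
  exists N, forall x, K x -> s <= nm x -> r <= nm (iter N expand x).
Proof.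
move=> s0; have [eta eta0 gain] := expand_gain s0.
exists (Num.bound (r / eta)) => x Kx sx.
have step k : r <= nm (iter k expand x) \/ s + k%:R * eta <= nm (iter k expand x).
  elim: k => [|k [IH|IH]]; first by right; rewrite mul0r addr0.
    by left; apply: le_trans IH (expand_enorm_ge (iter_expand_mem k Kx)).
  rewrite -natr1 mulrDl mul1r /=.
  have k_eta : 0 <= k%:R * eta by rewrite mulr_ge0 // ltW.
  have [y_lt|y_ge] := ltP (nm (iter k expand x)) r; last first.
    by left; apply: le_trans y_ge (expand_enorm_ge (iter_expand_mem k Kx)).
  have sy : s <= nm (iter k expand x) by lra.
  by right; have := gain _ (iter_expand_mem k Kx) sy (ltW y_lt); lra.
have := archi_boundP (divr_ge0 (ltW r0) (ltW eta0)).
rewrite ltr_pdivrMr // => r_lt; case: (step (Num.bound (r / eta))) => // ?.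
by have := ltW r_lt; lra.
Qed.

Lemma iter_expand_path k x : K x -> exists C : set 'rV[R]_n,
  [/\ connected C, C x, C (iter k expand x) & C `<=` [set y | K y /\ nm x <= nm y]].
Proof.
move=> Kx; elim: k => [|k [C [cC Cx Ck Cfar]]].
  by exists [set x]; split => //; [exact: connected1 | move=> y ->].
set y := iter k expand x in Ck; have Ky : K y := iter_expand_mem k Kx.
exists (C `|` seg y (expand y)); split; [|by left|by right; apply: seg_r|].
  by apply: connectedU => //; [exists y; split => //; apply: seg_l | apply: seg_connected].
move=> z [/Cfar //|yz]; split; first exact: convex_seg_sub convexK Ky (expand_mem y) _ yz.
have [_ xy] := Cfar y Ck; exact: le_trans xy (seg_expand_enorm_ge Ky yz).
Qed.

Lemma connected_sphere_noncritical a b : K a -> K b ->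
  dot a b ^+ 2 < dot a a * dot b b -> connected (esphere 0 r `&` K).
Proof.
move=> Ka Kb ab.
have [s /andP[s0 sr] [ab_far x_far]] := segments_enorm_ge r0 ab.
have [N escape] := iter_expand_escape s0; set F := iter N expand in escape.
apply: (connected_sphere_of_links convexK K0 r0 (p := F a)) => x [+ Kx].
rewrite /esphere /= subr0 => xr; have [c ac xc_far] := x_far x xr.
have Kc : K c by case: ac => ->.
have [C [cC Cx CF Cfar]] := iter_expand_path N Kx.
set L := seg x c `|` seg a b.
have L_far : L `<=` [set y | K y /\ s <= nm y].
  move=> y [xcy|aby]; split; [exact: convex_seg_sub convexK Kx Kc _ xcy | exact: xc_far
    | exact: convex_seg_sub convexK Ka Kb _ aby | exact: ab_far].
have cL : connected L.
  apply: connectedU; [exists c; split; first exact: seg_r | exact: seg_connected..].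
  by case: ac => ->; [apply: seg_l | apply: seg_r].
exists (C `|` F @` L); split; [|by left|by right; exists a => //; right; apply: seg_l|].
  apply: connectedU => //.
    by exists (F x); split => //; exists x => //; left; apply: seg_l.
  apply: connected_continuous_connected cL _.
  exact/continuous_subspaceT/iter_expand_continuous.
move=> z [/Cfar[Kz]|[y /L_far[Ky sy] <-]]; first by rewrite xr.
by split; [apply: iter_expand_mem | apply: escape].
Qed.

End Expansion.

Section Translation.
Variables (R : realType) (n : nat) (K : set 'rV[R]_n) (O : 'rV[R]_n).
Local Notation dot := (@dotp R n).
Local Notation nm := (@enorm R n).
Implicit Types (a b x y X : 'rV[R]_n).

Definition shift := [set y | K (y + O)].

Lemma translation_continuous : continuous (fun y : 'rV[R]_n => y + O).
Proof.
apply: enorm_lipschitz_continuous => x y.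
by rewrite opprD addrACA subrr addr0 normr_le_enorm.
Qed.

Lemma closed_shift : closed K -> closed shift.
Proof.
by move=> closedK; apply: preimage_closed closedK => y _; apply: translation_continuous.
Qed.

Lemma convex_shift : is_convex K -> is_convex shift.
Proof.
move=> convexK x y t Kx Ky t01; have := convexK _ _ _ Kx Ky t01; congr K.
by apply/rowP => i; rewrite !mxE; ring.
Qed.

Lemma esphereI_shift r :
  esphere O r `&` K = (fun y => y + O) @` (esphere 0 r `&` shift).
Proof.
apply/seteqP; split => [x [xr Kx]|_ [y [yr Ky] <-]].
  by exists (x - O); rewrite ?subrK //; split; rewrite /esphere /shift /= ?subr0 ?subrK.
by split => //; move: yr; rewrite /esphere /= subr0 addrK.
Qed.

Lemma affdim_ge2_shift : affdim_ge2 K ->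
  exists a b, [/\ shift a, shift b & dot a b ^+ 2 < dot a a * dot b b].
Proof.
move=> [m [p0 [p [Kp0 [Kp rank2]]]]]; apply: contrapT => no_pair.
have collinear a b : shift a -> shift b -> dot a a * dot b b <= dot a b ^+ 2.
  by move=> Ka Kb; rewrite leNgt; apply/negP => ab; apply: no_pair; exists a, b.
have [v v_dir] : exists v, forall y, shift y -> y = (dot y v / dot v v) *: v.
  have [[v [Kv v0]]|no_v] := pselect (exists v, shift v /\ v != 0).
    by exists v => y Ky; apply: collinear_of_dotp_sqr_ge (collinear _ _ Ky Kv) v0.
  exists 0 => y Ky; rewrite scaler0; apply: contrapT => y0.
  by apply: no_v; exists y; split => //; apply/eqP.
pose coef y := dot (y - O) v / dot v v.
have rank1 : \matrix_(i < m) (p i - p0) = (\col_(i < m) (coef (p i) - coef p0)) *m v.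
  apply/matrixP => i j; rewrite !mxE big_ord1 !mxE mulrBl.
  have pO y : K y -> y = coef y *: v + O.
    by move=> Ky; rewrite -v_dir ?subrK // /shift /= subrK.
  by rewrite {1}(pO _ (Kp i)) {1}(pO _ Kp0) !mxE; ring.
move: rank2; rewrite rank1 => /leq_trans/(_ (mxrankM_maxr _ _)).
by move=> /leq_trans/(_ (rank_leq_row v)).
Qed.

Lemma noncritical_lt_LCD r : (r%:E < LCD K O)%E ->
  forall y, shift y -> 0 < nm y -> nm y <= r -> exists2 z, shift z & 0 < dot y (z - y).
Proof.
move=> r_lt y Ky y0 yr; apply: contrapT => no_z.
have supp X : K X -> dot y (X - (y + O)) <= 0.
  move=> KX; rewrite leNgt; apply/negP => yX; apply: no_z; exists (X - O).
    by rewrite /shift /= subrK.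
  by rewrite (_ : X - O - y = X - (y + O)) // opprD addrA addrAC.
have crit : critical K O (y + O).
  split; [split|split].
  - exact: subset_closure.
  - by apply: (not_interior_supporting _ supp); rewrite -enorm_gt0.
  - by rewrite -subr_eq0 addrK -enorm_gt0.
  - move=> X KX; rewrite (_ : O - (y + O) = - y); last by rewrite opprD addrCA subrr addr0.
    by rewrite dotpNl oppr_ge0 supp.
have : (LCD K O <= (nm (y + O - O))%:E)%E by apply: ereal_inf_lbound; exists (y + O).
by rewrite addrK => /(lt_le_trans r_lt); rewrite lte_fin ltNge yr.
Qed.

End Translation.

Lemma le_CR (R : realType) (n : nat) (K : set 'rV[R]_n) (O : 'rV[R]_n) (l : \bar R) :
  (forall r : R, 0 < r -> (r%:E < l)%E -> connected (esphere O r `&` K)) -> (l <= CR K O)%E.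
Proof.
move=> conn; suff le_CR_real (e : R) : (e%:E <= l)%E -> (e%:E <= CR K O)%E.
  case: l conn le_CR_real => [l _ ->//|_ le_CR_real|_ _]; last exact: leNye.
  case: (CR K O) le_CR_real => [c|//|] le_CR_real.
    by have := le_CR_real (c + 1) (leey _); rewrite lee_fin gerDl ler10.
  by have := le_CR_real 0 (leey _).
move=> el; apply: ereal_sup_ubound; exists e => //= r r0 re.
by apply: conn r0 (lt_le_trans _ el); rewrite lte_fin.
Qed.

Lemma connected_sphere_lt_LCD (R : realType) (n : nat) (K : set 'rV[R]_n) (O : 'rV[R]_n)
    (r : R) :
  closed K -> is_convex K -> affdim_ge2 K -> K O -> 0 < r -> (r%:E < LCD K O)%E ->
  connected (esphere O r `&` K).
Proof.
move=> closedK convexK dimK KO r0 r_lt.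
have [a [b [Ka Kb ab]]] := affdim_ge2_shift O dimK.
rewrite esphereI_shift; apply: connected_continuous_connected (continuous_subspaceT _).
  apply: connected_sphere_noncritical Ka Kb ab.
  - exact: closed_shift.
  - exact: convex_shift.
  - by move: KO; rewrite -{1}(add0r O).
  - exact: r0.
  - exact: noncritical_lt_LCD.
exact: translation_continuous.
Qed.

Theorem mainTheorem1 (R : realType) (n : nat) (K : set 'rV[R]_n) (O : 'rV[R]_n) :
  closed K -> is_convex K -> affdim_ge2 K -> bnd K O ->
  (LCD K O <= CR K O)%E.
Proof.
move=> closedK convexK dimK [closureO _].
have KO : K O by rewrite ((closure_id K).1 closedK).
by apply: le_CR => r r0; apply: connected_sphere_lt_LCD.
Qed.
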